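(* Let $p$ be prime and let $V<W\le\mathbb F_p^k$ be subspaces with $\dim W=\dim V+1$. Let $v\in V^\perp\setminus W^\perp$ be an element of minimum Hamming weight in $V^\perp\setminus W^\perp$, and let $S=\mathrm{Supp}(v)$. Then $\pi_S(V)=\langle\pi_S(v)\rangle^\perp$, where the orthogonal complement is taken in $\mathbb F_p^S$.
   Context: For $x\in\mathbb F_p^k$, $\mathrm{Supp}(x)=\{i:x_i\ne0\}$, and its Hamming weight is $|\mathrm{Supp}(x)|$. $\pi_S:\mathbb F_p^k\to\mathbb F_p^S$ is the coordinate projection. $\perp$ denotes the orthogonal complement under the standard dot product. *)

From HB Require Import structures.
From mathcomp Require Import all_boot all_order all_algebra.
Set Implicit Arguments. Unset Strict Implicit. Unset Printing Implicit Defensive.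
Import GRing.Theory.
Local Open Scope ring_scope.

Definition dotv (F : fieldType) (n : nat) (x y : 'rV[F]_n) : F :=
  \sum_(i < n) x 0 i * y 0 i.

Definition in_perp (F : fieldType) (k : nat) (V : {vspace 'rV[F]_k}) (x : 'rV[F]_k) : Prop :=
  forall u, u \in V -> dotv u x = 0.

Definition supp (F : fieldType) (k : nat) (x : 'rV[F]_k) : {set 'I_k} :=
  [set i | x 0 i != 0].
Definition hweight (F : fieldType) (k : nat) (x : 'rV[F]_k) : nat := #|supp x|.

(* coordinate projection pi_S : F^k -> F^S, with F^S identified with 'rV_#|S|
   via the increasing enumeration enum_val of S *)
Definition proj (F : fieldType) (k : nat) (S : {set 'I_k}) (x : 'rV[F]_k) : 'rV[F]_#|S| :=
  \row_(j < #|S|) x 0 (enum_val j).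

From HB Require Import structures.
From mathcomp Require Import all_boot all_order all_algebra.
Set Implicit Arguments. Unset Strict Implicit. Unset Printing Implicit Defensive.
Import GRing.Theory.
Local Open Scope ring_scope.

(* Write S = Supp(v).  If y is in W^perp and Supp(y) is inside S, then y = 0:
   otherwise v - c y, with c chosen to cancel one coordinate of v, would be a
   vector of V^perp \ W^perp lighter than v.  Now let z in F^S be orthogonal to
   pi_S(V) and let y be z extended by zeros, so that y is in V^perp.  As
   W = V + <w0> for any w0 in W with <w0, v> <> 0, a suitable y - a v lies in
   W^perp and is supported in S, hence vanishes: z = a pi_S(v).  Thus
   pi_S(V)^perp = <pi_S(v)>, and taking orthogonal complements once more gives
   the claim. *)

Lemma addv_line_eq (K : fieldType) (vT : vectType K) (U W : {vspace vT}) w :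
  (U <= W)%VS -> \dim W = (\dim U).+1 -> w \in W -> w \notin U ->
  (U + <[w]>)%VS = W.
Proof.
move=> sUW dimW wW wU; apply/eqP; rewrite eqEdim subv_add sUW -memvE wW /= dimW.
rewrite (ltn_leqif (dimv_leqif_eq (addvSl U <[w]>))).
by apply: contra wU => /eqP->; rewrite memvE addvSr.
Qed.

Section DotProduct.
Variables (F : fieldType) (n : nat).
Implicit Types (x y z u w : 'rV[F]_n) (U W : {vspace 'rV[F]_n}).

Lemma dotvC x y : dotv x y = dotv y x.
Proof. by apply: eq_bigr => i _; rewrite mulrC. Qed.

Fact dotv_is_scalar x : scalar (dotv x).
Proof.
move=> a y z; rewrite /dotv mulr_sumr -big_split.
by apply: eq_bigr => i _; rewrite !mxE mulrDr mulrCA.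
Qed.

HB.instance Definition _ x :=
  GRing.isLinear.Build F 'rV[F]_n F *%R (dotv x) (dotv_is_scalar x).

Lemma in_perp_subv U W z : (U <= W)%VS -> in_perp W z -> in_perp U z.
Proof. by move=> sUW Wz u Uu; apply/Wz/(subvP sUW). Qed.

Lemma in_perp_vbasis U z :
  (forall i : 'I_(\dim U), dotv (vbasis U)`_i z = 0) -> in_perp U z.
Proof.
move=> bz u /coord_vbasis ->; rewrite dotvC linear_sum big1 // => i _.
by rewrite linearZ /= dotvC bz mulr0.
Qed.

Lemma not_in_perpP U z :
  ~ in_perp U z -> exists2 u, u \in U & dotv u z != 0.
Proof.
move=> Uz; case: (boolP [forall i : 'I_(\dim U), dotv (vbasis U)`_i z == 0]).
  by move=> /forallP b0; case: Uz; apply: in_perp_vbasis => i; apply/eqP.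
rewrite negb_forall => /existsP[i bz]; exists (vbasis U)`_i => //.
by apply/vbasis_mem/mem_nth; rewrite size_tuple.
Qed.

Lemma in_perp_addv (U1 U2 : {vspace 'rV[F]_n}) z :
  in_perp U1 z -> in_perp U2 z -> in_perp (U1 + U2) z.
Proof.
move=> U1z U2z _ /memv_addP[u1 /U1z u1z [u2 /U2z u2z ->]].
by rewrite dotvC linearD /= !(dotvC z) u1z u2z addr0.
Qed.

Lemma in_perp_line w z : dotv w z = 0 -> in_perp <[w]> z.
Proof. by move=> wz _ /vlineP[c ->]; rewrite dotvC linearZ /= dotvC wz mulr0. Qed.

(* [y <= B] means [y *m cokermx B = 0], and each column of [cokermx B] is
   orthogonal to [U]. *)
Lemma perp_perp_mem U y : (forall z, in_perp U z -> dotv y z = 0) -> y \in U.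
Proof.
move=> yUperp; pose B := \matrix_(i < \dim U) (vbasis U)`_i.
pose col_coker j := \row_l cokermx B l j.
have yB : (y <= B)%MS.
  rewrite submxE; apply/eqP/rowP => j; rewrite !mxE.
  rewrite -[RHS](yUperp (col_coker j)); first by apply: eq_bigr => l _; rewrite !mxE.
  apply: in_perp_vbasis => i.
  have := congr1 (fun M : 'M[F]_(\dim U, n) => M i j) (mulmx_coker B); rewrite !mxE => <-.
  by apply: eq_bigr => l _; rewrite !mxE.
have [D ->] := submxP yB.
have -> : D *m B = \sum_(i < \dim U) D 0 i *: (vbasis U)`_i.
  by apply/rowP => j; rewrite !mxE summxE; apply: eq_bigr => i _; rewrite !mxE.
by apply: memv_suml => i _; apply/memvZ/vbasis_mem/mem_nth; rewrite size_tuple.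
Qed.

End DotProduct.

Section Projection.
Variables (F : fieldType) (k : nat) (S : {set 'I_k}).
Implicit Types (x y u : 'rV[F]_k) (z : 'rV[F]_#|S|).

Fact proj_is_linear : linear (proj S : 'rV[F]_k -> 'rV[F]_#|S|).
Proof. by move=> a x y; apply/rowP => j; rewrite !mxE. Qed.

HB.instance Definition _ :=
  GRing.isLinear.Build F 'rV[F]_k 'rV[F]_#|S| *:%R (proj S) proj_is_linear.

Definition extend0 z : 'rV[F]_k := \row_i \sum_(j | enum_val j == i) z 0 j.

Lemma extend0K : cancel extend0 (proj S).
Proof.
move=> z; apply/rowP => j; rewrite !mxE (big_pred1 j) // => j'.
by rewrite /= (inj_eq enum_val_inj).
Qed.

Lemma supp_extend0 z : supp (extend0 z) \subset S.
Proof.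
apply/subsetP => i; rewrite inE mxE; apply: contraR => iS.
rewrite big1 ?eqxx // => j /eqP ej.
by move: (enum_valP j); rewrite ej (negbTE iS).
Qed.

Lemma supp_subset_eq0 x i : supp x \subset S -> i \notin S -> x 0 i = 0.
Proof.
by move=> sxS iS; apply/eqP; apply: contraNT iS => xi; apply/(subsetP sxS); rewrite inE.
Qed.

Lemma dotv_proj u x : supp x \subset S -> dotv u x = dotv (proj S u) (proj S x).
Proof.
move=> sxS; rewrite [RHS](eq_bigr (fun j => u 0 (enum_val j) * x 0 (enum_val j))).
  rewrite -(big_enum_val (fun i => u 0 i * x 0 i)) /= [LHS](bigID (mem S)) /=.
  by rewrite [X in _ + X]big1 ?addr0 // => i iS; rewrite (supp_subset_eq0 sxS iS) mulr0.
by move=> j _; rewrite !mxE.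
Qed.

Lemma supp_subZ_subset x y c :
  supp x \subset S -> supp y \subset S -> supp (x - c *: y) \subset S.
Proof.
move=> sxS syS; apply/subsetP => i; rewrite inE !mxE; apply: contraR => iS.
by rewrite (supp_subset_eq0 sxS iS) (supp_subset_eq0 syS iS) mulr0 subr0.
Qed.

End Projection.

Section MinimalWeight.
Variables (F : fieldType) (k : nat) (V W : {vspace 'rV[F]_k}) (v : 'rV[F]_k).
Hypotheses (sVW : (V <= W)%VS) (dimW : \dim W = (\dim V).+1).
Hypotheses (vV : in_perp V v) (vW : ~ in_perp W v).
Hypothesis v_min : forall w, in_perp V w -> ~ in_perp W w -> (hweight v <= hweight w)%N.

Local Notation S := (supp v).

Lemma perpW_supp_eq0 y : in_perp W y -> supp y \subset S -> y = 0.
Proof.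
move=> Wy syS; apply/rowP => i; rewrite mxE; apply/eqP; apply: contraT => yi.
pose w := v - (v 0 i / y 0 i) *: y.
have Vw : in_perp V w.
  by move=> u uV; rewrite linearB linearZ /= vV // (in_perp_subv sVW Wy) // mulr0 subr0.
have Ww : ~ in_perp W w.
  move=> Ww; apply: vW => u uW; rewrite -[v](subrK ((v 0 i / y 0 i) *: y)) -/w.
  by rewrite linearD linearZ /= Ww // Wy // mulr0 addr0.
have: (hweight w < hweight v)%N.
  apply/proper_card/properP; split; first exact: supp_subZ_subset.
  exists i; first by move: (subsetP syS i); rewrite !inE; apply.
  by rewrite inE negbK !mxE divfK // subrr.
by rewrite ltnNge v_min.
Qed.

Local Notation projV := (linfun (proj S) @: V)%VS.

Lemma perp_proj_subspace z : in_perp projV z -> exists a, z = a *: proj S v.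
Proof.
move=> Vz; pose y := extend0 z.
have Vy : in_perp V y.
  move=> u uV; rewrite (dotv_proj u (supp_extend0 z)) extend0K; apply: Vz.
  by rewrite -lfunE memv_img.
have [w0 w0W w0v] := not_in_perpP vW.
have w0V : w0 \notin V by apply: contra w0v => /vV ->.
pose a := dotv w0 y / dotv w0 v.
have Wya : in_perp W (y - a *: v).
  rewrite -(addv_line_eq sVW dimW w0W w0V); apply: in_perp_addv.
    by move=> u uV; rewrite linearB linearZ /= Vy // vV // mulr0 subr0.
  by apply: in_perp_line; rewrite linearB linearZ /= divfK // subrr.
exists a; rewrite -[z]extend0K -linearZ /=; congr (proj S _); apply/eqP.
by rewrite -subr_eq0 (perpW_supp_eq0 Wya) // supp_subZ_subset ?supp_extend0.
Qed.

Lemma mem_proj_subspace y : (y \in projV) = (dotv y (proj S v) == 0).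
Proof.
apply/idP/eqP => [/memv_imgP[u uV ->]|yv].
  by rewrite lfunE /= -dotv_proj ?vV.
apply: perp_perp_mem => z /perp_proj_subspace[a ->].
by rewrite linearZ /= yv mulr0.
Qed.

End MinimalWeight.

Theorem corollary7p4 (p : nat) (k : nat) (hp : prime p)
  (V W : {vspace 'rV['F_p]_k})
  (hVW : (V <= W)%VS) (hdim : \dim W = (\dim V).+1)
  (v : 'rV['F_p]_k)
  (hvV : in_perp V v) (hvW : ~ in_perp W v)
  (hmin : forall w : 'rV['F_p]_k, in_perp V w -> ~ in_perp W w ->
            (hweight v <= hweight w)%N) :
  forall y : 'rV['F_p]_#|supp v|,
    (exists2 u, u \in V & proj (supp v) u = y) <->
    dotv y (proj (supp v) v) = 0.
Proof.
have memV := mem_proj_subspace hVW hdim hvV hvW hmin.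
move=> y; split => [[u uV <-]|/eqP].
  by apply/eqP; rewrite -memV -lfunE memv_img.
by rewrite -memV => /memv_imgP[u uV ->]; exists u; rewrite ?lfunE.
Qed.
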